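(* Let $\lambda>0$, $\mu>0$ with $\lambda<\mu+1$. For $\theta>0$ let $$\alpha^*(\theta)=\begin{cases}\mu+\theta(1-\lambda), & \lambda\theta\le 1,\\ \theta+\mu+1-2\sqrt{\lambda\theta}, & \lambda\theta>1,\end{cases}$$ and $V(\theta)=[\alpha^*(\theta)]^2/2$. Let $0<\theta_L<\theta_F$. 1. If $\lambda\le 1$, then $V$ is weakly increasing on $(0,\infty)$, so the firm weakly prefers $\theta_F$ to $\theta_L$. 2. If $\lambda>1$, then $V$ is U-shaped with global minimum at $\theta=\lambda$ (strictly decreasing on $(0,\lambda)$, strictly increasing on $(\lambda,\infty)$), and every maximizer of $V$ over $[\theta_L,\theta_F]$ is an endpoint. Moreover: (a) if $\theta_F\le\lambda$, $V$ is strictly decreasing on $[\theta_L,\theta_F]$ and the firm chooses $\theta_L$ (rejects the upgrade); (b) if $\theta_F>\lambda$, the firm upgrades (chooses $\theta_F$) if and only if $V(\theta_F)>V(\theta_L)$. When in addition $\lambda\theta_L>1$, this is equivalent to $\sqrt{\theta_F}+\sqrt{\theta_L}>2\sqrt{\lambda}$, or equivalently (given $\theta_F>\theta_L$) to $\theta_F>\big[\max\{0,\,2\sqrt{\lambda}-\sqrt{\theta_L}\}\big]^2$. When $\lambda\theta_L\le 1$, $V(\theta_L)=[\mu+\theta_L(1-\lambda)]^2/2$.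
   Context: A firm with profit $\pi(\alpha,d)=(\theta+\mu)\alpha-\alpha^2/2-\frac{\alpha}{\alpha+d}\lambda\alpha\theta-d$ (deployment $\alpha$, security investment $d\ge0$, capability $\theta$, breach-loss magnitude $\lambda$, readiness $\mu$) chooses capability $\theta\in\{\theta_L,\theta_F\}$ (legacy vs. frontier) to maximize firm value $V(\theta)$, where $\alpha^*(\theta)$ is its optimal deployment and $V(\theta)=[\alpha^*(\theta)]^2/2$ is its maximized profit given $\theta$. *)

From Stdlib Require Import Reals Lra.
Open Scope R_scope.

Definition alpha_star (lam mu theta : R) : R :=
  if Rle_dec (lam * theta) 1 then mu + theta * (1 - lam)
  else theta + mu + 1 - 2 * sqrt (lam * theta).

Definition V (lam mu theta : R) : R := (alpha_star lam mu theta) ^ 2 / 2.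

(* The firm upgrades (chooses theta_F over theta_L) iff it strictly prefers
   theta_F; ties are resolved in favour of the legacy capability. *)
Definition upgrades (lam mu thL thF : R) : Prop := V lam mu thF > V lam mu thL.

(* With [s = sqrt theta] and [a = sqrt lam], the closed form reads
   [alpha* = mu + theta (1 - lam)] for [theta <= 1/lam] and
   [alpha* = (s - a)^2 + mu + 1 - lam] for [theta >= 1/lam], the two formulas
   agreeing at the kink [theta = 1/lam].  On the first piece [alpha*] is affine
   with slope [1 - lam]; on the second, differences factor as
   [(s' - s) (s' + s - 2 a)].  Hence for [lam <= 1] both pieces increase, while
   for [lam > 1] the first piece and the second one up to [theta = lam]
   decrease and the rest increases.  Since [alpha* > 0] (this is where
   [lam < mu + 1] enters), [V = alpha*^2 / 2] is ordered like [alpha*], and the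
   upgrade criterion is the sign of [sqrt thF + sqrt thL - 2 sqrt lam]. *)

From Stdlib Require Import Reals Lra.
Open Scope R_scope.

Lemma monotone_glue (rel : R -> R -> Prop) (f : R -> R) (lo b hi : R) :
  (forall u v w, rel u v -> rel v w -> rel u w) ->
  (forall x y, lo < x -> x < y -> y <= b -> rel (f x) (f y)) ->
  (forall x y, b <= x -> x < y -> y <= hi -> rel (f x) (f y)) ->
  forall x y, lo < x -> x < y -> y <= hi -> rel (f x) (f y).
Proof.
  intros rel_trans left_piece right_piece x y hx hxy hy.
  destruct (Rle_dec y b) as [hyb | hyb]; [now apply left_piece |].
  destruct (Rle_dec b x) as [hbx | hbx]; [now apply right_piece |].
  apply rel_trans with (f b); [apply left_piece | apply right_piece]; lra.
Qed.

Lemma valley_min (f : R -> R) (lo c : R) :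
  (forall x y, lo < x -> x < y -> y <= c -> f y < f x) ->
  (forall x y, c <= x -> x < y -> f x < f y) ->
  forall x, lo < x -> f c <= f x.
Proof.
  intros f_dec f_inc x hx.
  destruct (Rtotal_order x c) as [hxc | [-> | hcx]].
  - apply Rlt_le, f_dec; lra.
  - apply Rle_refl.
  - apply Rlt_le, f_inc; lra.
Qed.

Lemma valley_argmax_endpoint (f : R -> R) (lo c a b : R) :
  (forall x y, lo < x -> x < y -> y <= c -> f y < f x) ->
  (forall x y, c <= x -> x < y -> f x < f y) ->
  lo < a ->
  forall t, a <= t <= b -> (forall s, a <= s <= b -> f s <= f t) ->
  t = a \/ t = b.
Proof.
  intros f_dec f_inc ha t [hat htb] t_max.
  destruct (Req_dec t a) as [| hta]; [now left |].
  destruct (Req_dec t b) as [| htb']; [now right |].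
  exfalso; destruct (Rle_dec t c) as [htc | htc].
  - assert (f t < f a) by (apply f_dec; lra).
    assert (f a <= f t) by (apply t_max; lra). lra.
  - assert (f t < f b) by (apply f_inc; lra).
    assert (f b <= f t) by (apply t_max; lra). lra.
Qed.

Lemma lt_sqrt_Rmax0_sqr (d F : R) : 0 < F -> d < sqrt F <-> (Rmax 0 d) ^ 2 < F.
Proof.
  intros hF.
  pose proof (sqrt_sqrt F (Rlt_le _ _ hF)).
  pose proof (sqrt_lt_R0 F hF).
  destruct (Rle_dec d 0) as [hd | hd].
  - rewrite Rmax_left by lra. split; intros; nra.
  - rewrite Rmax_right by lra. split; intros h; [nra |].
    destruct (Rlt_dec d (sqrt F)) as [| hsd]; [assumption | nra].
Qed.

Lemma half_sqr_lt_iff (a b : R) : 0 < a -> 0 < b -> a ^ 2 / 2 < b ^ 2 / 2 <-> a < b.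
Proof. intros; split; intros; nra. Qed.

Lemma half_sqr_le (a b : R) : 0 < a -> a <= b -> a ^ 2 / 2 <= b ^ 2 / 2.
Proof. intros; nra. Qed.

Section FirmValue.

Variables lam mu : R.
Hypothesis lam_gt0 : 0 < lam.

Let a := alpha_star lam mu.

Lemma alpha_star_affine x : lam * x <= 1 -> a x = mu + x * (1 - lam).
Proof. intros h; unfold a, alpha_star; destruct Rle_dec; lra. Qed.

Lemma alpha_star_sqr x : 1 <= lam * x -> a x = (sqrt x - sqrt lam) ^ 2 + mu + 1 - lam.
Proof.
  intros h.
  assert (hx : 0 < x) by nra.
  pose proof (sqrt_sqrt x (Rlt_le _ _ hx)).
  pose proof (sqrt_sqrt lam (Rlt_le _ _ lam_gt0)).
  unfold a, alpha_star; destruct Rle_dec as [h1 | h1].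
  - (* at the kink [lam * x = 1] both formulas equal [mu + x - 1] *)
    assert (hk : sqrt lam * sqrt x = 1).
    { rewrite <- sqrt_mult, (Rle_antisym _ _ h1 h) by lra. apply sqrt_1. }
    nra.
  - rewrite sqrt_mult by lra. nra.
Qed.

Lemma alpha_star_sub_affine x y : lam * x <= 1 -> lam * y <= 1 ->
  a y - a x = (y - x) * (1 - lam).
Proof. intros hx hy; rewrite !alpha_star_affine by assumption; ring. Qed.

Lemma alpha_star_sub_sqr x y : 1 <= lam * x -> 1 <= lam * y ->
  a y - a x = (sqrt y - sqrt x) * (sqrt y + sqrt x - 2 * sqrt lam).
Proof. intros hx hy; rewrite !alpha_star_sqr by assumption; ring. Qed.

Lemma alpha_star_increasing_from_lam x y : lam <= x -> 1 <= lam * x -> x < y ->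
  a x < a y.
Proof.
  intros hlx h1x hxy.
  assert (sqrt lam <= sqrt x) by (apply sqrt_le_1_alt; lra).
  assert (sqrt x < sqrt y) by (apply sqrt_lt_1_alt; lra).
  pose proof (alpha_star_sub_sqr x y h1x ltac:(nra)). nra.
Qed.

Lemma alpha_star_decreasing_to_lam x y : 1 <= lam * x -> x < y -> y <= lam ->
  a y < a x.
Proof.
  intros h1x hxy hyl.
  assert (0 < x) by nra.
  assert (sqrt y <= sqrt lam) by (apply sqrt_le_1_alt; lra).
  assert (sqrt x < sqrt y) by (apply sqrt_lt_1_alt; lra).
  pose proof (alpha_star_sub_sqr x y h1x ltac:(nra)). nra.
Qed.

Lemma mul_le1_of_le_inv x : x <= / lam -> lam * x <= 1.
Proof.
  intros h; rewrite <- (Rinv_r lam) by lra.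
  now apply Rmult_le_compat_l; [lra |].
Qed.

Lemma one_le_mul_of_inv_le x : / lam <= x -> 1 <= lam * x.
Proof.
  intros h; rewrite <- (Rinv_r lam) by lra.
  now apply Rmult_le_compat_l; [lra |].
Qed.

Lemma alpha_star_nondecreasing x y : lam <= 1 -> 0 < x -> x <= y -> a x <= a y.
Proof.
  intros hl1 hx hxy.
  destruct (Req_dec x y) as [-> | hne]; [apply Rle_refl |].
  apply (monotone_glue Rle a 0 (/ lam) y Rle_trans); try lra.
  - intros u v _ huv hv.
    apply mul_le1_of_le_inv in hv.
    pose proof (alpha_star_sub_affine u v ltac:(nra) hv). nra.
  - intros u v hu huv _.
    pose proof (one_le_mul_of_inv_le u hu) as h1u.
    apply Rlt_le, alpha_star_increasing_from_lam; nra.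
Qed.

Hypothesis mu_gt0 : 0 < mu.
Hypothesis lam_lt_mu1 : lam < mu + 1.

Lemma alpha_star_gt0 x : 0 < x -> 0 < a x.
Proof.
  intros hx.
  destruct (Rle_dec (lam * x) 1) as [h | h].
  - (* if [lam > 1] then [x < 1] and [mu > lam - 1] *)
    rewrite alpha_star_affine by assumption.
    destruct (Rle_dec lam 1); nra.
  - rewrite alpha_star_sqr by lra.
    pose proof (pow2_ge_0 (sqrt x - sqrt lam)). lra.
Qed.

Lemma V_lt_iff x y : 0 < x -> 0 < y -> V lam mu x < V lam mu y <-> a x < a y.
Proof. intros; apply half_sqr_lt_iff; now apply alpha_star_gt0. Qed.

Lemma V_le_of_alpha_star_le x y : 0 < x -> a x <= a y -> V lam mu x <= V lam mu y.
Proof. intros; apply half_sqr_le; [now apply alpha_star_gt0 | assumption]. Qed.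

Lemma V_nondecreasing x y : lam <= 1 -> 0 < x -> x <= y -> V lam mu x <= V lam mu y.
Proof.
  intros; apply V_le_of_alpha_star_le; [| apply alpha_star_nondecreasing]; assumption.
Qed.

Lemma upgrades_iff_sqrt_sum thL thF : 1 < lam * thL -> thL < thF ->
  upgrades lam mu thL thF <-> sqrt thF + sqrt thL > 2 * sqrt lam.
Proof.
  intros h1L hLF.
  assert (0 < thL) by nra.
  assert (sqrt thL < sqrt thF) by (apply sqrt_lt_1_alt; lra).
  pose proof (alpha_star_sub_sqr thL thF ltac:(lra) ltac:(nra)).
  unfold upgrades, Rgt; rewrite V_lt_iff by lra.
  split; intros; nra.
Qed.

Section HighLoss.

Hypothesis lam_gt1 : 1 < lam.

Lemma alpha_star_decreasing x y : 0 < x -> x < y -> y <= lam -> a y < a x.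
Proof.
  apply (monotone_glue (fun p q => q < p) a 0 (/ lam) lam).
  - intros p q r; lra.
  - intros u v hu huv hv.
    apply mul_le1_of_le_inv in hv.
    pose proof (alpha_star_sub_affine u v ltac:(nra) hv). nra.
  - intros u v hu huv hv.
    pose proof (one_le_mul_of_inv_le u hu) as h1u.
    now apply alpha_star_decreasing_to_lam.
Qed.

Lemma alpha_star_increasing x y : lam <= x -> x < y -> a x < a y.
Proof. intros; apply alpha_star_increasing_from_lam; nra. Qed.

Lemma V_decreasing x y : 0 < x -> x < y -> y <= lam -> V lam mu y < V lam mu x.
Proof.
  intros; apply V_lt_iff; [lra | lra | now apply alpha_star_decreasing].
Qed.

Lemma V_increasing x y : lam <= x -> x < y -> V lam mu x < V lam mu y.
Proof.
  intros; apply V_lt_iff; [lra | lra | now apply alpha_star_increasing].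
Qed.

End HighLoss.

End FirmValue.

Theorem proposition5 (lam mu thL thF : R)
  (hlam : 0 < lam) (hmu : 0 < mu) (hlm : lam < mu + 1)
  (hL : 0 < thL) (hLF : thL < thF) :
  (* Part 1 *)
  (lam <= 1 ->
     (forall x y, 0 < x -> x <= y -> V lam mu x <= V lam mu y) /\
     V lam mu thL <= V lam mu thF) /\
  (* Part 2 *)
  (1 < lam ->
     (forall x, 0 < x -> V lam mu lam <= V lam mu x) /\
     (forall x y, 0 < x -> x < y -> y <= lam -> V lam mu y < V lam mu x) /\
     (forall x y, lam <= x -> x < y -> V lam mu x < V lam mu y) /\
     (forall t, thL <= t <= thF ->
        (forall s, thL <= s <= thF -> V lam mu s <= V lam mu t) ->
        t = thL \/ t = thF) /\
     (* (a) *)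
     (thF <= lam ->
        (forall x y, thL <= x -> x < y -> y <= thF -> V lam mu y < V lam mu x) /\
        V lam mu thF < V lam mu thL /\ ~ upgrades lam mu thL thF) /\
     (* (b) *)
     (lam < thF ->
        (upgrades lam mu thL thF <-> V lam mu thF > V lam mu thL) /\
        (1 < lam * thL ->
           (upgrades lam mu thL thF <-> sqrt thF + sqrt thL > 2 * sqrt lam) /\
           (upgrades lam mu thL thF <->
              thF > (Rmax 0 (2 * sqrt lam - sqrt thL)) ^ 2)) /\
        (lam * thL <= 1 ->
           V lam mu thL = (mu + thL * (1 - lam)) ^ 2 / 2))).
Proof.
  split.
  { intros hl1; split; [| apply V_nondecreasing; lra].
    intros x y; now apply V_nondecreasing. }
  intros hl1.
  pose proof (V_decreasing lam mu hlam hmu hlm hl1) as dec.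
  pose proof (V_increasing lam mu hlam hmu hlm hl1) as inc.
  split; [exact (valley_min _ 0 lam dec inc) |].
  split; [exact dec |]. split; [exact inc |].
  split; [exact (valley_argmax_endpoint _ 0 lam thL thF dec inc hL) |].
  split.
  { intros hF.
    assert (V lam mu thF < V lam mu thL) by (apply dec; lra).
    split; [intros x y hx hxy hy; apply dec; lra |].
    split; [assumption | unfold upgrades; lra]. }
  intros hF; split; [reflexivity |]. split.
  - intros h1L.
    pose proof (upgrades_iff_sqrt_sum lam mu hlam hmu hlm thL thF h1L hLF) as key.
    split; [exact key |].
    rewrite key; unfold Rgt; rewrite <- lt_sqrt_Rmax0_sqr by lra.
    split; intros; lra.
  - intros h; unfold V; now rewrite alpha_star_affine.
Qed.
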